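(* Let $\mathcal E$ be a relation on closed values and $t_0,t_1$ closed terms with $t_0\approx^p_{\mathcal E}t_1$. Then for every closed evaluation context $F$, $F[t_0]\approx^p_{\mathcal E}F[t_1]$.
   Context: Terms of $\lambda_S$: $t ::= x \mid \lambda x.t \mid t\,t \mid \mathcal{S}k.t \mid \langle t\rangle$ (shift binds $k$; $\langle\cdot\rangle$ reset), up to $\alpha$-conversion. Values $v::=\lambda x.t$. Pure contexts $E ::= \Box \mid v\,E \mid E\,t$; evaluation contexts $F ::= \Box \mid v\,F \mid F\,t \mid \langle F\rangle$. Reduction: $F[(\lambda x.t)v]\to F[t\{v/x\}]$; $F[\langle E[\mathcal Sk.t]\rangle]\to F[\langle t\{\lambda x.\langle E[x]\rangle/k\}\rangle]$ ($x\notin\mathrm{fv}(E)$); $F[\langle v\rangle]\to F[v]$; $\to^*$ reflexive-transitive closure. Program: term $\langle t\rangle$ (ranged over by $p$). Closures: for $R$ a relation on closed terms, $\widetilde R$ is the smallest relation containing $R$, all $(x,x)$, closed under all term constructors, restricted to closed terms; $\widehat R$ is the smallest relation on closed evaluation contexts with $\Box\widehat R\Box$, $v_0F_0\widehat Rv_1F_1$ if $F_0\widehat RF_1,v_0\widetilde Rv_1$; $F_0t_0\widehat RF_1t_1$ if $F_0\widehat RF_1,t_0\widetilde Rt_1$; $\langle F_0\rangle\widehat R\langle F_1\rangle$ if $F_0\widehat RF_1$. Environmental bisimilarity for programs: an environment $\mathcal E$ is a relation on closed values; an environmental relation $\mathcal X$ is a set of environments and triples $(\mathcal E,t_0,t_1)$,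 $t_0,t_1$ closed, written $t_0\mathcal X_{\mathcal E}t_1$. $\mathcal X$ is an environmental bisimulation for programs if (1) if $t_0\mathcal X_{\mathcal E}t_1$ and $t_0,t_1$ are not both programs, then for all pure $E_0\widehat{\mathcal E}E_1$, $\langle E_0[t_0]\rangle\mathcal X_{\mathcal E}\langle E_1[t_1]\rangle$; (2) if $p_0\mathcal X_{\mathcal E}p_1$: (a) $p_0\to p_0'$ (program) implies $p_1\to^*p_1'$ (program) with $p_0'\mathcal X_{\mathcal E}p_1'$; (b) $p_0\to v_0$ implies $p_1\to^*v_1$ and $\{(v_0,v_1)\}\cup\mathcal E\in\mathcal X$; (c) symmetric conditions; (3) for $\mathcal E\in\mathcal X$, $(\lambda x.t_0)\mathcal E(\lambda x.t_1)$ and $v_0\widetilde{\mathcal E}v_1$ imply $t_0\{v_0/x\}\mathcal X_{\mathcal E}t_1\{v_1/x\}$. $\approx^p$ is the largest such relation; $t_0\approx^p_{\mathcal E}t_1$ means $(\mathcal E,t_0,t_1)\in\approx^p$. *)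

From Stdlib Require Import Arith Relations.

Inductive term : Type :=
| Var   : nat -> term
| Lam   : term -> term
| App   : term -> term -> term
| Shift : term -> term            (* S k. t : binds k = index 0 *)
| Reset : term -> term.

Definition is_value (t : term) : Prop :=
  match t with Lam _ => True | _ => False end.

Definition is_program (t : term) : Prop :=
  match t with Reset _ => True | _ => False end.

Fixpoint closed_at (n : nat) (t : term) : Prop :=
  match t with
  | Var k => k < n
  | Lam b => closed_at (S n) b
  | App a b => closed_at n a /\ closed_at n b
  | Shift b => closed_at (S n) b
  | Reset b => closed_at n b
  end.

Definition closed (t : term) : Prop := closed_at 0 t.

Fixpoint lift (d c : nat) (t : term) : term :=
  match t with
  | Var n => if n <? c then Var n else Var (n + d)
  | Lam b => Lam (lift d (S c) b)
  | App a b => App (lift d c a) (lift d c b)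
  | Shift b => Shift (lift d (S c) b)
  | Reset b => Reset (lift d c b)
  end.

(* subst k u t = t{u / index k} (indices above k are decremented) *)
Fixpoint subst (k : nat) (u : term) (t : term) : term :=
  match t with
  | Var n => if n =? k then lift k 0 u
             else if k <? n then Var (pred n) else Var n
  | Lam b => Lam (subst (S k) u b)
  | App a b => App (subst k u a) (subst k u b)
  | Shift b => Shift (subst (S k) u b)
  | Reset b => Reset (subst k u b)
  end.

(* evaluation contexts F ::= [] | v F | F t | <F>;
   CAppR b F stands for (Lam b) F. *)
Inductive ctx : Type :=
| Hole  : ctx
| CAppR : term -> ctx -> ctx
| CAppL : ctx -> term -> ctx
| CReset : ctx -> ctx.

Fixpoint plug (F : ctx) (t : term) : term :=
  match F with
  | Hole => t
  | CAppR b F => App (Lam b) (plug F t)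
  | CAppL F u => App (plug F t) u
  | CReset F => Reset (plug F t)
  end.

Fixpoint pure (F : ctx) : Prop :=
  match F with
  | Hole => True
  | CAppR _ F => pure F
  | CAppL F _ => pure F
  | CReset _ => False
  end.

Fixpoint liftC (d c : nat) (F : ctx) : ctx :=
  match F with
  | Hole => Hole
  | CAppR b F => CAppR (lift d (S c) b) (liftC d c F)
  | CAppL F u => CAppL (liftC d c F) (lift d c u)
  | CReset F => CReset (liftC d c F)
  end.

Fixpoint closed_ctx (F : ctx) : Prop :=
  match F with
  | Hole => True
  | CAppR b F => closed (Lam b) /\ closed_ctx F
  | CAppL F u => closed_ctx F /\ closed u
  | CReset F => closed_ctx F
  end.

Inductive step : term -> term -> Prop :=
| step_beta : forall F b v, is_value v ->
    step (plug F (App (Lam b) v)) (plug F (subst 0 v b))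
| step_shift : forall F E b, pure E ->
    step (plug F (Reset (plug E (Shift b))))
         (plug F (Reset (subst 0 (Lam (Reset (plug (liftC 1 0 E) (Var 0)))) b)))
| step_reset : forall F v, is_value v ->
    step (plug F (Reset v)) (plug F v).

Definition steps : term -> term -> Prop := clos_refl_trans term step.

Definition rel := term -> term -> Prop.

Inductive tilde_open (R : rel) : rel :=
| tl_base  : forall t0 t1, R t0 t1 -> tilde_open R t0 t1
| tl_var   : forall x, tilde_open R (Var x) (Var x)
| tl_lam   : forall t0 t1, tilde_open R t0 t1 -> tilde_open R (Lam t0) (Lam t1)
| tl_app   : forall a0 a1 b0 b1, tilde_open R a0 a1 -> tilde_open R b0 b1 ->
               tilde_open R (App a0 b0) (App a1 b1)
| tl_shift : forall t0 t1, tilde_open R t0 t1 -> tilde_open R (Shift t0) (Shift t1)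
| tl_reset : forall t0 t1, tilde_open R t0 t1 -> tilde_open R (Reset t0) (Reset t1).

Definition tilde (R : rel) : rel :=
  fun t0 t1 => tilde_open R t0 t1 /\ closed t0 /\ closed t1.

Inductive hat (R : rel) : ctx -> ctx -> Prop :=
| hat_hole  : hat R Hole Hole
| hat_appR  : forall b0 b1 F0 F1, hat R F0 F1 -> tilde R (Lam b0) (Lam b1) ->
                hat R (CAppR b0 F0) (CAppR b1 F1)
| hat_appL  : forall F0 F1 t0 t1, hat R F0 F1 -> tilde R t0 t1 ->
                hat R (CAppL F0 t0) (CAppL F1 t1)
| hat_reset : forall F0 F1, hat R F0 F1 -> hat R (CReset F0) (CReset F1).

Definition is_env (E : rel) : Prop :=
  forall v0 v1, E v0 v1 ->
    is_value v0 /\ is_value v1 /\ closed v0 /\ closed v1.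

(* an environmental relation: a set of environments and a set of triples *)
Record envrel : Type := {
  X_env : rel -> Prop;
  X_tri : rel -> term -> term -> Prop
}.

Definition add_pair (v0 v1 : term) (E : rel) : rel :=
  fun a b => (a = v0 /\ b = v1) \/ E a b.

Definition is_bisim_p (X : envrel) : Prop :=
  (forall E, X_env X E -> is_env E) /\
  (forall E t0 t1, X_tri X E t0 t1 -> is_env E /\ closed t0 /\ closed t1) /\
  (* (1) *)
  (forall E t0 t1, X_tri X E t0 t1 -> ~ (is_program t0 /\ is_program t1) ->
     forall E0 E1, pure E0 -> pure E1 -> hat E E0 E1 ->
       X_tri X E (Reset (plug E0 t0)) (Reset (plug E1 t1))) /\
  (* (2) *)
  (forall E p0 p1, X_tri X E p0 p1 -> is_program p0 -> is_program p1 ->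
     (forall p0', step p0 p0' -> is_program p0' ->
        exists p1', steps p1 p1' /\ is_program p1' /\ X_tri X E p0' p1') /\
     (forall v0, step p0 v0 -> is_value v0 ->
        exists v1, steps p1 v1 /\ is_value v1 /\ X_env X (add_pair v0 v1 E)) /\
     (forall p1', step p1 p1' -> is_program p1' ->
        exists p0', steps p0 p0' /\ is_program p0' /\ X_tri X E p0' p1') /\
     (forall v1, step p1 v1 -> is_value v1 ->
        exists v0, steps p0 v0 /\ is_value v0 /\ X_env X (add_pair v0 v1 E))) /\
  (* (3) *)
  (forall E, X_env X E ->
     forall b0 b1, E (Lam b0) (Lam b1) ->
     forall v0 v1, is_value v0 -> is_value v1 -> tilde E v0 v1 ->
       X_tri X E (subst 0 v0 b0) (subst 0 v1 b1)).

Definition approx_p_tri (E : rel) (t0 t1 : term) : Prop :=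
  exists X, is_bisim_p X /\ X_tri X E t0 t1.

Definition approx_p_env (E : rel) : Prop :=
  exists X, is_bisim_p X /\ X_env X E.

From Stdlib Require Import Arith Lia Relations FunctionalExtensionality PropExtensionality.

(* The relation X collecting all triples (E, s0, s1) in which s0 and s1 are
   either G0[a0] and G1[a1] with a0 ≈ a1 under some environment ES and G0, G1
   related contexts over ES ("active" pairs), or are related by the term
   closure of a bisimilar environment ES ("passive" pairs), with E contained in
   the closure of ES, is an environmental bisimulation.  A step of an active
   pair happens inside the bisimilar programs once the innermost enclosing
   reset has been absorbed into them by clause (1), and is answered by
   bisimilarity; when those programs return values v0, v1 the pair becomes
   passive over ES extended with (v0, v1).  A step of a passive pair is
   mirrored by the same step on the other side; only a β-redex whose function
   comes from ES itself needs clause (3), which makes the pair active again. *)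

Fixpoint ctx_comp (G H : ctx) : ctx :=
  match G with
  | Hole => H
  | CAppR b G => CAppR b (ctx_comp G H)
  | CAppL G u => CAppL (ctx_comp G H) u
  | CReset G => CReset (ctx_comp G H)
  end.

Lemma plug_ctx_comp G H t : plug (ctx_comp G H) t = plug G (plug H t).
Proof. induction G; simpl; f_equal; auto. Qed.

Lemma ctx_comp_hole G : ctx_comp G Hole = G.
Proof. induction G; simpl; f_equal; auto. Qed.

Lemma pure_ctx_comp_r G H : pure (ctx_comp G H) -> pure H.
Proof. induction G; simpl; tauto. Qed.

Lemma plug_value F t : is_value (plug F t) -> F = Hole /\ is_value t.
Proof. destruct F; simpl; tauto. Qed.

Lemma plug_not_value F t : ~ is_value t -> ~ is_value (plug F t).
Proof. intros Ht Hv. apply plug_value in Hv. tauto. Qed.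

Lemma program_dec t : {is_program t} + {~ is_program t}.
Proof. destruct t; simpl; auto. Qed.

Lemma pure_dec F : {pure F} + {~ pure F}.
Proof. induction F; simpl; auto. Qed.

Lemma pure_plug_program G a : pure G -> is_program (plug G a) -> G = Hole.
Proof. destruct G; simpl; tauto. Qed.

Lemma closed_at_mono t n m : closed_at n t -> n <= m -> closed_at m t.
Proof.
  induction t in n, m |- *; simpl; intros Ht Hle; intuition (eauto with arith).
Qed.

Lemma lift_closed_at t d c : closed_at c t -> lift d c t = t.
Proof.
  induction t as [x| | | |] in c |- *; simpl; intros Ht; f_equal; intuition auto.
  destruct (Nat.ltb_spec x c); [reflexivity | lia].
Qed.

Lemma subst_closed_at t k u : closed_at k t -> subst k u t = t.
Proof.
  induction t as [x| | | |] in k |- *; simpl; intros Ht; f_equal; intuition auto.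
  destruct (Nat.eqb_spec x k); [lia|].
  destruct (Nat.ltb_spec k x); [lia | reflexivity].
Qed.

Lemma closed_at_subst b n k u :
  closed_at (S n) b -> k <= n -> closed u -> closed_at n (subst k u b).
Proof.
  induction b as [x| | | |] in n, k |- *; simpl; intros Hb Hk Hu;
    intuition (auto with arith).
  destruct (Nat.eqb_spec x k).
  - rewrite lift_closed_at by (eapply closed_at_mono; eauto; lia).
    eapply closed_at_mono; eauto; lia.
  - destruct (Nat.ltb_spec k x); simpl; lia.
Qed.

Fixpoint closed_ctx_at (n : nat) (F : ctx) : Prop :=
  match F with
  | Hole => True
  | CAppR b F => closed_at (S n) b /\ closed_ctx_at n F
  | CAppL F u => closed_ctx_at n F /\ closed_at n u
  | CReset F => closed_ctx_at n F
  end.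

Lemma closed_ctx_at_0 F : closed_ctx F <-> closed_ctx_at 0 F.
Proof. induction F; simpl; unfold closed; simpl; tauto. Qed.

Lemma closed_ctx_at_mono F n m : closed_ctx_at n F -> n <= m -> closed_ctx_at m F.
Proof.
  induction F; simpl; intros HF Hle; intuition eauto.
  all: eapply closed_at_mono; eauto; lia.
Qed.

Lemma closed_at_plug F n t :
  closed_at n (plug F t) <-> closed_ctx_at n F /\ closed_at n t.
Proof. induction F; simpl; tauto. Qed.

Lemma closed_plug F t : closed (plug F t) <-> closed_ctx F /\ closed t.
Proof. unfold closed. rewrite closed_ctx_at_0. apply closed_at_plug. Qed.

Lemma closed_ctx_comp G H : closed_ctx (ctx_comp G H) <-> closed_ctx G /\ closed_ctx H.
Proof. induction G; simpl; tauto. Qed.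

Lemma liftC_closed_at F d c : closed_ctx_at c F -> liftC d c F = F.
Proof. induction F; simpl; intros; f_equal; intuition auto using lift_closed_at. Qed.

Lemma plug_eq_plug F G a b : ~ is_value a -> ~ is_value b -> plug F a = plug G b ->
  (exists H, F = ctx_comp G H /\ b = plug H a) \/
  (exists H, G = ctx_comp F H /\ a = plug H b).
Proof.
  intros Ha Hb. revert G.
  induction F as [|c F IH|F IH u|F IH]; intros [|c' G|G u'|G] Heq; simpl in Heq;
    try discriminate.
  all: try (right; eexists; split; [reflexivity | exact Heq]).
  all: try (left; eexists; split; [reflexivity | symmetry; exact Heq]).
  all: injection Heq; clear Heq.
  all: try (intros _ Hv; exfalso; apply (plug_not_value G b Hb); rewrite <- Hv; exact I).
  all: try (intros _ Hv; exfalso; apply (plug_not_value F a Ha); rewrite Hv; exact I).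
  all: intros; subst; destruct (IH G) as [[K [-> ->]] | [K [-> ->]]]; auto;
    [left | right]; exists K; split; reflexivity.
Qed.

Lemma step_plug G a b : step a b -> step (plug G a) (plug G b).
Proof. destruct 1; rewrite <- !plug_ctx_comp; constructor; assumption. Qed.

Lemma steps_plug G a b : steps a b -> steps (plug G a) (plug G b).
Proof.
  induction 1; [apply rt_step, step_plug | apply rt_refl | eapply rt_trans]; eauto.
Qed.

Lemma step_plug_reset_inv G q r : step (plug G (Reset q)) r ->
  exists r', step (Reset q) r' /\ r = plug G r'.
Proof.
  assert (Hq : ~ is_value (Reset q)) by (simpl; tauto).
  inversion 1 as [F b v Hv Hs Hr | F E b HE Hs Hr | F v Hv Hs Hr]; subst.
  - destruct (plug_eq_plug F G (App (Lam b) v) (Reset q)) as [[K [-> ->]] | [K [-> HK]]];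
      auto; try (simpl; tauto).
    + exists (plug K (subst 0 v b)); split; [constructor | apply plug_ctx_comp]; auto.
    + exfalso. destruct K as [|c K|K t|K]; simpl in HK; try discriminate;
        injection HK as E1 E2; apply (plug_not_value K (Reset q) Hq).
      * rewrite <- E2; exact Hv.
      * rewrite <- E1; exact I.
  - destruct (plug_eq_plug F G (Reset (plug E (Shift b))) (Reset q)) as [[K [-> ->]] | [K [-> HK]]];
      auto; try (simpl; tauto).
    + eexists; split; [constructor | apply plug_ctx_comp]; auto.
    + destruct K as [| | |K]; simpl in HK; try discriminate; injection HK; intros HEq.
      * subst q. eexists; split; [apply (step_shift Hole) | rewrite ctx_comp_hole]; auto.
      * exfalso.
        destruct (plug_eq_plug E K (Shift b) (Reset q)) as [[K2 [-> HK2]] | [K2 [_ HK2]]];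
          auto; try (simpl; tauto).
        -- apply pure_ctx_comp_r in HE. destruct K2; simpl in *; try discriminate; tauto.
        -- destruct K2; discriminate.
  - destruct (plug_eq_plug F G (Reset v) (Reset q)) as [[K [-> ->]] | [K [-> HK]]];
      auto; try (simpl; tauto).
    + exists (plug K v); split; [constructor | apply plug_ctx_comp]; auto.
    + destruct K as [| | |K]; simpl in HK; try discriminate; injection HK; intros HEq.
      * subst q. eexists; split; [apply (step_reset Hole) | rewrite ctx_comp_hole]; auto.
      * exfalso. apply (plug_not_value K (Reset q)); [assumption | congruence].
Qed.

Lemma step_reset_inv q r : step (Reset q) r -> is_program r \/ (is_value r /\ r = q).
Proof.
  inversion 1 as [F b v _ Hs | F E b _ Hs | F v Hv Hs]; subst;
    destruct F; simpl in *; try discriminate; auto.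
  injection Hs as ->; auto.
Qed.

Lemma step_closed s r : step s r -> closed s -> closed r.
Proof.
  destruct 1 as [F b v _ | F E b HE | F v _]; rewrite !closed_plug; simpl;
    intros [HF Hc]; split; auto; unfold closed in *; simpl in *.
  - destruct Hc; apply closed_at_subst; auto.
  - apply closed_at_plug in Hc as [HEc Hb]; simpl in Hb.
    apply closed_at_subst; auto.
    unfold closed; simpl. rewrite liftC_closed_at by assumption.
    apply closed_at_plug; split; [eapply closed_ctx_at_mono; eauto | simpl; lia].
Qed.

Lemma steps_closed s r : steps s r -> closed s -> closed r.
Proof. induction 1; eauto using step_closed. Qed.

Inductive hat_open (R : rel) : ctx -> ctx -> Prop :=
| ho_hole  : hat_open R Hole Hole
| ho_appR  : forall b0 b1 F0 F1, hat_open R F0 F1 -> tilde_open R (Lam b0) (Lam b1) ->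
               hat_open R (CAppR b0 F0) (CAppR b1 F1)
| ho_appL  : forall F0 F1 t0 t1, hat_open R F0 F1 -> tilde_open R t0 t1 ->
               hat_open R (CAppL F0 t0) (CAppL F1 t1)
| ho_reset : forall F0 F1, hat_open R F0 F1 -> hat_open R (CReset F0) (CReset F1).

Lemma hat_iff R F0 F1 :
  hat R F0 F1 <-> hat_open R F0 F1 /\ closed_ctx F0 /\ closed_ctx F1.
Proof.
  split.
  - induction 1; simpl; unfold tilde in *; intuition; constructor; tauto.
  - intros (H & H0 & H1). induction H; simpl in *; constructor; unfold tilde; intuition.
Qed.

Ltac tilde_open_cong :=
  first [apply tl_var | apply tl_lam | apply tl_app | apply tl_shift | apply tl_reset].

Lemma tilde_open_refl R t : tilde_open R t t.
Proof. induction t; tilde_open_cong; auto. Qed.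

Lemma hat_open_refl R F : hat_open R F F.
Proof. induction F; constructor; auto using tilde_open_refl. Qed.

Lemma tilde_open_mono (R S : rel) : (forall a b, R a b -> tilde_open S a b) ->
  forall x y, tilde_open R x y -> tilde_open S x y.
Proof. intros HRS x y H. induction H; try tilde_open_cong; auto. Qed.

Lemma hat_open_mono (R S : rel) : (forall a b, R a b -> tilde_open S a b) ->
  forall F0 F1, hat_open R F0 F1 -> hat_open S F0 F1.
Proof. intros HRS F0 F1 H. induction H; constructor; eauto using tilde_open_mono. Qed.

Lemma tilde_open_plug R F0 F1 a0 a1 : hat_open R F0 F1 -> tilde_open R a0 a1 ->
  tilde_open R (plug F0 a0) (plug F1 a1).
Proof. induction 1; simpl; intros; try tilde_open_cong; auto. Qed.

Lemma hat_open_comp R G0 G1 H0 H1 : hat_open R G0 G1 -> hat_open R H0 H1 ->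
  hat_open R (ctx_comp G0 H0) (ctx_comp G1 H1).
Proof. induction 1; simpl; try constructor; auto. Qed.

Lemma hat_open_pure R F0 F1 : hat_open R F0 F1 -> pure F0 -> pure F1.
Proof. induction 1; simpl; auto. Qed.

Lemma hat_open_split_reset R G0 G1 : hat_open R G0 G1 -> ~ pure G0 ->
  exists G0' G1' P0 P1,
    G0 = ctx_comp G0' (CReset P0) /\ G1 = ctx_comp G1' (CReset P1) /\
    hat_open R G0' G1' /\ hat_open R P0 P1 /\ pure P0 /\ pure P1.
Proof.
  induction 1 as [| b0 b1 F0 F1 _ IH Hb | F0 F1 t0 t1 _ IH Ht | F0 F1 HF IH]; simpl; intros Hp.
  - tauto.
  - destruct (IH Hp) as (G0' & G1' & P0 & P1 & -> & -> & ? & ? & ? & ?).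
    exists (CAppR b0 G0'), (CAppR b1 G1'), P0, P1; repeat split; auto; constructor; auto.
  - destruct (IH Hp) as (G0' & G1' & P0 & P1 & -> & -> & ? & ? & ? & ?).
    exists (CAppL G0' t0), (CAppL G1' t1), P0, P1; repeat split; auto; constructor; auto.
  - destruct (pure_dec F0) as [Hp0 | Hp0].
    + exists Hole, Hole, F0, F1; repeat split; eauto using hat_open_pure; constructor.
    + destruct (IH Hp0) as (G0' & G1' & P0 & P1 & -> & -> & ? & ? & ? & ?).
      exists (CReset G0'), (CReset G1'), P0, P1; repeat split; auto; constructor; auto.
Qed.

Section ValueEnvironment.

Variable R : rel.
Hypothesis HR : is_env R.

Lemma tilde_open_value a b : tilde_open R a b -> is_value a -> is_value b.
Proof. destruct 1 as [a b Hab| | | | |]; simpl; auto; apply HR in Hab; tauto. Qed.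

Lemma tilde_open_program a b : tilde_open R a b -> is_program a -> is_program b.
Proof.
  destruct 1 as [a b Hab| | | | |]; simpl; auto.
  apply HR in Hab. destruct a; simpl in *; tauto.
Qed.

Lemma tilde_open_subst b0 b1 u0 u1 k : tilde_open R b0 b1 -> tilde_open R u0 u1 ->
  closed u0 -> closed u1 -> tilde_open R (subst k u0 b0) (subst k u1 b1).
Proof.
  intros Hb Hu Hc0 Hc1. induction Hb in k |- *; simpl; try tilde_open_cong; auto.
  - destruct (HR _ _ H) as (_ & _ & H0 & H1).
    rewrite !subst_closed_at by (eapply closed_at_mono; eauto; lia).
    apply tl_base; auto.
  - destruct (x =? k); [rewrite !lift_closed_at; auto|].
    destruct (k <? x); tilde_open_cong.
Qed.

Lemma tilde_open_non_value_inv a t :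
  tilde_open R a t -> ~ is_value a ->
  match a with
  | Var x => t = Var x
  | Lam b => False
  | App a b => exists a' b', t = App a' b' /\ tilde_open R a a' /\ tilde_open R b b'
  | Shift b => exists b', t = Shift b' /\ tilde_open R b b'
  | Reset b => exists b', t = Reset b' /\ tilde_open R b b'
  end.
Proof.
  destruct 1 as [a b Hab| | | | |]; simpl; intros Hv; eauto.
  exfalso. apply HR in Hab; tauto.
Qed.

Lemma tilde_open_lam_inv b t : tilde_open R (Lam b) t ->
  exists b', t = Lam b' /\ (R (Lam b) (Lam b') \/ tilde_open R b b').
Proof.
  intros H. pose proof (tilde_open_value _ _ H I) as Hv.
  destruct t as [|b'| | |]; simpl in Hv; try tauto.
  exists b'. inversion H; subst; auto.
Qed.

Lemma tilde_open_plug_inv F a t : tilde_open R (plug F a) t -> ~ is_value a ->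
  exists F1 a1, t = plug F1 a1 /\ hat_open R F F1 /\ tilde_open R a a1.
Proof.
  intros Ht Ha. induction F as [|b F IH|F IH u|F IH] in t, Ht |- *; simpl in Ht.
  - exists Hole, t; repeat split; auto; constructor.
  - apply tilde_open_non_value_inv in Ht as (w & s & -> & Hw & Hs); [|simpl; tauto].
    destruct (tilde_open_lam_inv _ _ Hw) as (b1 & -> & _).
    destruct (IH _ Hs) as (F1 & a1 & -> & HF & Ha1).
    exists (CAppR b1 F1), a1; repeat split; auto; constructor; auto.
  - apply tilde_open_non_value_inv in Ht as (s & w & -> & Hs & Hw); [|simpl; tauto].
    destruct (IH _ Hs) as (F1 & a1 & -> & HF & Ha1).
    exists (CAppL F1 w), a1; repeat split; auto; constructor; auto.
  - apply tilde_open_non_value_inv in Ht as (s & -> & Hs); [|simpl; tauto].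
    destruct (IH _ Hs) as (F1 & a1 & -> & HF & Ha1).
    exists (CReset F1), a1; repeat split; auto; constructor; auto.
Qed.

End ValueEnvironment.

Lemma tilde_open_transp R a b : tilde_open R a b -> tilde_open (transp term R) b a.
Proof. induction 1; try tilde_open_cong; auto. apply tl_base; auto. Qed.

Lemma tilde_transp R a b : tilde R a b -> tilde (transp term R) b a.
Proof. unfold tilde; intuition auto using tilde_open_transp. Qed.

Lemma hat_transp R F0 F1 : hat R F0 F1 -> hat (transp term R) F1 F0.
Proof. induction 1; constructor; auto using tilde_transp. Qed.

Lemma is_env_transp R : is_env R -> is_env (transp term R).
Proof. unfold is_env, transp; intros HR v0 v1 H. apply HR in H; tauto. Qed.

Lemma tilde_mono (R S : rel) : (forall a b, R a b -> S a b) ->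
  forall x y, tilde R x y -> tilde S x y.
Proof.
  intros HRS x y (Hxy & Hc). split; auto.
  eapply tilde_open_mono; [|exact Hxy]. intros a b Hab. apply tl_base, HRS, Hab.
Qed.

Lemma tilde_mono_tilde (R S : rel) : (forall a b, R a b -> tilde S a b) ->
  forall x y, tilde R x y -> tilde S x y.
Proof.
  intros HRS x y (Hxy & Hc). split; auto.
  eapply tilde_open_mono; [|exact Hxy]. intros a b Hab. apply HRS, Hab.
Qed.

Definition envrel_transp (X : envrel) : envrel :=
  {| X_env := fun E => X_env X (transp term E);
     X_tri := fun E a b => X_tri X (transp term E) b a |}.

Lemma add_pair_transp v0 v1 E :
  transp term (add_pair v0 v1 E) = add_pair v1 v0 (transp term E).
Proof.
  unfold transp, add_pair.
  apply functional_extensionality; intro a; apply functional_extensionality; intro b.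
  apply propositional_extensionality; tauto.
Qed.

Lemma is_bisim_p_transp X : is_bisim_p X -> is_bisim_p (envrel_transp X).
Proof.
  intros (W1 & W2 & C1 & C2 & C3). unfold is_bisim_p; simpl.
  split; [|split; [|split; [|split]]].
  - intros E H. exact (is_env_transp _ (W1 _ H)).
  - intros E t0 t1 H. apply W2 in H as (H & ? & ?).
    split; [exact (is_env_transp _ H) | tauto].
  - intros E t0 t1 H Hnp E0 E1 P0 P1 Hh. apply C1; auto using hat_transp. tauto.
  - intros E p0 p1 H Hp0 Hp1.
    destruct (C2 _ _ _ H Hp1 Hp0) as (D1 & D2 & D3 & D4).
    split; [|split; [|split]].
    + intros p0' Hs Hp'. destruct (D3 p0' Hs Hp') as (p1' & ? & ? & ?). eauto.
    + intros v0 Hs Hv. destruct (D4 v0 Hs Hv) as (v1 & ? & ? & ?).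
      exists v1. rewrite add_pair_transp. auto.
    + intros p1' Hs Hp'. destruct (D1 p1' Hs Hp') as (p0' & ? & ? & ?). eauto.
    + intros v1 Hs Hv. destruct (D2 v1 Hs Hv) as (v0 & ? & ? & ?).
      exists v0. rewrite add_pair_transp. auto.
  - intros E H b0 b1 HE v0 v1 Hv0 Hv1 Ht. apply C3; auto using tilde_transp.
Qed.

Lemma approx_p_tri_transp E a b :
  approx_p_tri E a b -> approx_p_tri (transp term E) b a.
Proof. intros (X & HX & H). exists (envrel_transp X); auto using is_bisim_p_transp. Qed.

Lemma approx_p_env_transp E : approx_p_env E -> approx_p_env (transp term E).
Proof. intros (X & HX & H). exists (envrel_transp X); auto using is_bisim_p_transp. Qed.

Lemma approx_p_tri_wf E a b : approx_p_tri E a b -> is_env E /\ closed a /\ closed b.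
Proof. intros (X & (_ & W2 & _) & H). eauto. Qed.

Lemma approx_p_env_wf E : approx_p_env E -> is_env E.
Proof. intros (X & (W1 & _) & H). eauto. Qed.

Lemma approx_p_reset_pure E t0 t1 :
  approx_p_tri E t0 t1 -> ~ (is_program t0 /\ is_program t1) ->
  forall E0 E1, pure E0 -> pure E1 -> hat E E0 E1 ->
  approx_p_tri E (Reset (plug E0 t0)) (Reset (plug E1 t1)).
Proof.
  intros (X & HX & H) Hnp E0 E1 P0 P1 Hh. exists X. split; [exact HX|].
  destruct HX as (_ & _ & C1 & _). auto.
Qed.

Lemma approx_p_program_step E p0 p1 :
  approx_p_tri E p0 p1 -> is_program p0 -> is_program p1 ->
  forall p0', step p0 p0' -> is_program p0' ->
  exists p1', steps p1 p1' /\ is_program p1' /\ approx_p_tri E p0' p1'.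
Proof.
  intros (X & HX & H) Hp0 Hp1 p0' Hs Hp0'.
  pose proof HX as (_ & _ & _ & C2 & _).
  destruct (proj1 (C2 _ _ _ H Hp0 Hp1) p0' Hs Hp0') as (p1' & ? & ? & ?).
  exists p1'; repeat split; auto. exists X; auto.
Qed.

Lemma approx_p_value_step E p0 p1 :
  approx_p_tri E p0 p1 -> is_program p0 -> is_program p1 ->
  forall v0, step p0 v0 -> is_value v0 ->
  exists v1, steps p1 v1 /\ is_value v1 /\ approx_p_env (add_pair v0 v1 E).
Proof.
  intros (X & HX & H) Hp0 Hp1 v0 Hs Hv0.
  pose proof HX as (_ & _ & _ & C2 & _).
  destruct (proj1 (proj2 (C2 _ _ _ H Hp0 Hp1)) v0 Hs Hv0) as (v1 & ? & ? & ?).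
  exists v1; repeat split; auto. exists X; auto.
Qed.

Lemma approx_p_subst E : approx_p_env E ->
  forall b0 b1, E (Lam b0) (Lam b1) ->
  forall v0 v1, is_value v0 -> is_value v1 -> tilde E v0 v1 ->
  approx_p_tri E (subst 0 v0 b0) (subst 0 v1 b1).
Proof.
  intros (X & HX & H) b0 b1 Hb v0 v1 Hv0 Hv1 Hv. exists X. split; [exact HX|].
  destruct HX as (_ & _ & _ & _ & C3). auto.
Qed.

Definition ctx_related (ES : rel) (s0 s1 : term) : Prop :=
  exists G0 G1 a0 a1, s0 = plug G0 a0 /\ s1 = plug G1 a1 /\
    hat ES G0 G1 /\ approx_p_tri ES a0 a1.

Definition tilde_related (ES : rel) (s0 s1 : term) : Prop :=
  approx_p_env ES /\ tilde ES s0 s1.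

Definition upto_ctx (ES : rel) (s0 s1 : term) : Prop :=
  ctx_related ES s0 s1 \/ tilde_related ES s0 s1.

Definition step_matched (ES : rel) (r s1 : term) : Prop :=
  exists r1 ES', steps s1 r1 /\ (forall a b, ES a b -> ES' a b) /\ upto_ctx ES' r r1 /\
    (is_program r -> is_program r1) /\
    (is_value r -> is_value r1 /\ tilde_related ES' r r1).

Lemma ctx_related_closed ES s0 s1 : ctx_related ES s0 s1 -> closed s0 /\ closed s1.
Proof.
  intros (G0 & G1 & a0 & a1 & -> & -> & Hh & Ha).
  apply approx_p_tri_wf in Ha. apply hat_iff in Hh. rewrite !closed_plug. tauto.
Qed.

(* The bisimilar parts of an active pair of programs can be taken to be
   programs themselves: otherwise clause (1) of ≈ absorbs the innermost
   enclosing reset. *)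
Lemma ctx_related_programs ES s0 s1 :
  ctx_related ES s0 s1 -> is_program s0 -> is_program s1 ->
  exists G0 G1 p0 p1, s0 = plug G0 p0 /\ s1 = plug G1 p1 /\ hat ES G0 G1 /\
    approx_p_tri ES p0 p1 /\ is_program p0 /\ is_program p1.
Proof.
  intros (G0 & G1 & a0 & a1 & -> & -> & Hh & Ha) Hp0 Hp1.
  destruct (program_dec a0) as [Pa0 | Pa0]; [destruct (program_dec a1) as [Pa1 | Pa1] |].
  1: exists G0, G1, a0, a1; repeat split; auto.
  all: pose proof (approx_p_tri_wf _ _ _ Ha) as (_ & Hc0 & Hc1).
  all: apply hat_iff in Hh as (Ho & HG0 & HG1).
  all: destruct (pure_dec G0) as [Pu | Pu];
         [exfalso; pose proof (pure_plug_program _ _ Pu Hp0) as ->;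
          inversion Ho; subst; simpl in *; tauto|].
  all: destruct (hat_open_split_reset _ _ _ Ho Pu)
         as (G0' & G1' & P0 & P1 & -> & -> & HG' & HP & PP0 & PP1).
  all: apply closed_ctx_comp in HG0 as [HG0' HP0]; apply closed_ctx_comp in HG1 as [HG1' HP1].
  all: exists G0', G1', (Reset (plug P0 a0)), (Reset (plug P1 a1)).
  all: rewrite !plug_ctx_comp; repeat split; simpl; auto.
  all: try (apply hat_iff; auto).
  all: apply approx_p_reset_pure; auto; [tauto | apply hat_iff; auto].
Qed.

Lemma tilde_related_matched ES ES' s1 r r1 :
  (forall a b, ES a b -> ES' a b) -> approx_p_env ES' -> tilde_open ES' r r1 ->
  closed r -> closed r1 -> steps s1 r1 -> step_matched ES r s1.
Proof.
  intros Hsub He Ht Hc Hc1 Hs. pose proof (approx_p_env_wf _ He) as HE.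
  assert (Hrel : tilde_related ES' r r1) by (repeat split; auto).
  exists r1, ES'; repeat split; auto.
  - right; auto.
  - apply (tilde_open_program _ HE r); auto.
  - apply (tilde_open_value _ HE r); auto.
Qed.

Lemma ctx_related_step ES s0 s1 r :
  ctx_related ES s0 s1 -> is_program s0 -> is_program s1 -> step s0 r ->
  step_matched ES r s1.
Proof.
  intros HK Hp0 Hp1 Hs. pose proof (ctx_related_closed _ _ _ HK) as [Hc0 Hc1].
  destruct (ctx_related_programs _ _ _ HK Hp0 Hp1)
    as (G0 & G1 & p0 & p1 & -> & -> & Hh & Ha & Pp0 & Pp1).
  destruct p0 as [| | | |q]; simpl in Pp0; try tauto.
  destruct (step_plug_reset_inv _ _ _ Hs) as (r' & Hs' & ->).
  destruct (step_reset_inv _ _ Hs') as [Pr | [Vr ->]].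
  - destruct (approx_p_program_step _ _ _ Ha Pp0 Pp1 r' Hs' Pr) as (p1' & Hss & Pp1' & Ha').
    exists (plug G1 p1'), ES.
    split; [apply steps_plug; exact Hss|]. split; [auto|].
    split; [left; exists G0, G1, r', p1'; auto|]. split.
    + intros _. destruct G0; inversion Hh; subst; simpl in *; auto.
    + intros Hv. apply plug_value in Hv. destruct r'; simpl in *; tauto.
  - destruct (approx_p_value_step _ _ _ Ha Pp0 Pp1 q Hs' Vr) as (v1 & Hss & Vv1 & He).
    apply hat_iff in Hh as (Ho & _ & _).
    apply (tilde_related_matched _ (add_pair q v1 ES) _ _ (plug G1 v1)); auto.
    + intros a b Hab; right; auto.
    + apply tilde_open_plug; [|apply tl_base; left; auto].
      eapply hat_open_mono; [|exact Ho]. intros a b Hab; apply tl_base; right; auto.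
    + eapply step_closed; eauto.
    + eapply steps_closed; [apply steps_plug; exact Hss | exact Hc1].
    + apply steps_plug; auto.
Qed.

Section TildeRelatedStep.

Variable ES : rel.
Hypothesis HES : approx_p_env ES.

Let HE : is_env ES := approx_p_env_wf _ HES.

Lemma tilde_related_beta F b v s1 :
  is_value v -> is_program (plug F (App (Lam b) v)) ->
  tilde ES (plug F (App (Lam b) v)) s1 -> step_matched ES (plug F (subst 0 v b)) s1.
Proof.
  intros Hv Hp (Ht & Hc0 & Hc1).
  destruct (tilde_open_plug_inv _ HE _ _ _ Ht) as (F1 & a1 & -> & HF & Ha); [simpl; auto|].
  apply (tilde_open_non_value_inv _ HE) in Ha as (w & u & -> & Hw & Hu); [|simpl; auto].
  pose proof (tilde_open_value _ HE _ _ Hu Hv) as Vu.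
  destruct (tilde_open_lam_inv _ HE _ _ Hw) as (b1 & -> & [Hb | Hb]).
  all: apply closed_plug in Hc0 as [HF0 Hr0]; apply closed_plug in Hc1 as [HF1 Hr1].
  all: destruct Hr0 as [Hb0 Hv0]; destruct Hr1 as [Hb1 Hu1].
  all: assert (Hs : steps (plug F1 (App (Lam b1) u)) (plug F1 (subst 0 u b1)))
         by (apply rt_step, step_beta; auto).
  - destruct F as [| | |F]; simpl in Hp; try tauto. inversion HF; subst.
    exists (plug (CReset F2) (subst 0 u b1)), ES.
    split; [exact Hs|]. split; [auto|]. split; [|simpl; tauto].
    left. exists (CReset F), (CReset F2), (subst 0 v b), (subst 0 u b1).
    repeat split; [apply hat_iff; simpl; auto|].
    apply approx_p_subst; auto. repeat split; auto; apply Hu || tauto.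
  - apply (tilde_related_matched _ ES _ _ (plug F1 (subst 0 u b1))); auto.
    + apply tilde_open_plug, (tilde_open_subst _ HE); auto.
    + apply closed_plug; split; auto. apply closed_at_subst; auto.
    + apply closed_plug; split; auto. apply closed_at_subst; auto.
Qed.

Lemma tilde_related_shift F E b s1 :
  pure E -> tilde ES (plug F (Reset (plug E (Shift b)))) s1 ->
  step_matched ES
    (plug F (Reset (subst 0 (Lam (Reset (plug (liftC 1 0 E) (Var 0)))) b))) s1.
Proof.
  intros PE (Ht & Hc0 & Hc1).
  destruct (tilde_open_plug_inv _ HE _ _ _ Ht) as (F1 & a1 & -> & HF & Ha); [simpl; auto|].
  apply (tilde_open_non_value_inv _ HE) in Ha as (y & -> & Hy); [|simpl; auto].
  destruct (tilde_open_plug_inv _ HE _ _ _ Hy) as (E1 & y' & -> & HE1 & Hy'); [simpl; auto|].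
  apply (tilde_open_non_value_inv _ HE) in Hy' as (b1 & -> & Hb); [|simpl; auto].
  apply closed_plug in Hc0 as [HF0 Hr0]; apply closed_plug in Hc1 as [HF1 Hr1].
  apply closed_at_plug in Hr0 as [HE0 Hb0]; apply closed_at_plug in Hr1 as [HE1c Hb1].
  assert (Hk : forall E', closed_ctx_at 0 E' -> closed (Lam (Reset (plug E' (Var 0))))).
  { intros E' HE'. apply closed_at_plug; split; [eapply closed_ctx_at_mono; eauto | simpl; lia]. }
  rewrite liftC_closed_at by assumption.
  apply (tilde_related_matched _ ES _ _
           (plug F1 (Reset (subst 0 (Lam (Reset (plug E1 (Var 0)))) b1)))); auto.
  - apply tilde_open_plug, tl_reset, (tilde_open_subst _ HE); auto.
    apply tl_lam, tl_reset, tilde_open_plug, tl_var; assumption.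
  - apply closed_plug; split; auto. apply closed_at_subst; auto.
  - apply closed_plug; split; auto. apply closed_at_subst; auto.
  - apply rt_step.
    rewrite <- (liftC_closed_at E1 1 0) at 2 by assumption.
    apply step_shift, (hat_open_pure _ _ _ HE1 PE).
Qed.

Lemma tilde_related_reset F v s1 :
  is_value v -> tilde ES (plug F (Reset v)) s1 -> step_matched ES (plug F v) s1.
Proof.
  intros Hv (Ht & Hc0 & Hc1).
  destruct (tilde_open_plug_inv _ HE _ _ _ Ht) as (F1 & a1 & -> & HF & Ha); [simpl; auto|].
  apply (tilde_open_non_value_inv _ HE) in Ha as (u & -> & Hu); [|simpl; auto].
  apply closed_plug in Hc0 as [HF0 Hr0]; apply closed_plug in Hc1 as [HF1 Hr1].
  apply (tilde_related_matched _ ES _ _ (plug F1 u)); auto using tilde_open_plug.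
  - apply closed_plug; auto.
  - apply closed_plug; auto.
  - apply rt_step, step_reset, (tilde_open_value _ HE v); auto.
Qed.

End TildeRelatedStep.

Lemma upto_ctx_step ES s0 s1 r :
  upto_ctx ES s0 s1 -> is_program s0 -> is_program s1 -> step s0 r ->
  step_matched ES r s1.
Proof.
  intros [HK | [HES Ht]] Hp0 Hp1 Hs; [eapply ctx_related_step; eauto|].
  destruct Hs as [F b v Hv | F E b PE | F v Hv].
  - apply tilde_related_beta; auto.
  - apply tilde_related_shift; auto.
  - apply tilde_related_reset; auto.
Qed.

(* [E] is only required to lie in the closure of [ES]: the values returned by a
   passive pair are related by [tilde ES], not by [ES]. *)
Definition ctx_closure_env (E : rel) : Prop :=
  is_env E /\ exists ES, approx_p_env ES /\ (forall a b, E a b -> tilde ES a b).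

Definition ctx_closure_tri (E : rel) (s0 s1 : term) : Prop :=
  is_env E /\ closed s0 /\ closed s1 /\
  exists ES, (forall a b, E a b -> tilde ES a b) /\ upto_ctx ES s0 s1.

Definition ctx_closure : envrel :=
  {| X_env := ctx_closure_env; X_tri := ctx_closure_tri |}.

Lemma upto_ctx_transp ES s0 s1 : upto_ctx ES s0 s1 -> upto_ctx (transp term ES) s1 s0.
Proof.
  intros [(G0 & G1 & a0 & a1 & -> & -> & Hh & Ha) | [He Ht]].
  - left. exists G1, G0, a1, a0. auto using hat_transp, approx_p_tri_transp.
  - right. split; auto using approx_p_env_transp, tilde_transp.
Qed.

Lemma ctx_closure_tri_transp E s0 s1 :
  ctx_closure_tri E s0 s1 -> ctx_closure_tri (transp term E) s1 s0.
Proof.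
  intros (HE & Hc0 & Hc1 & ES & Hsub & HK).
  split; [apply is_env_transp; auto|]. split; [auto|]. split; [auto|].
  exists (transp term ES). split; auto using upto_ctx_transp.
  intros a b Hab. apply tilde_transp, Hsub, Hab.
Qed.

Lemma ctx_closure_env_transp E : ctx_closure_env E -> ctx_closure_env (transp term E).
Proof.
  intros (HE & ES & He & Hsub). split; auto using is_env_transp.
  exists (transp term ES). split; auto using approx_p_env_transp.
  intros a b Hab. apply tilde_transp, Hsub, Hab.
Qed.

Lemma ctx_closure_program_step E p0 p1 :
  ctx_closure_tri E p0 p1 -> is_program p0 -> is_program p1 ->
  forall p0', step p0 p0' -> is_program p0' ->
  exists p1', steps p1 p1' /\ is_program p1' /\ ctx_closure_tri E p0' p1'.
Proof.
  intros (HE & Hc0 & Hc1 & ES & Hsub & HK) Pp0 Pp1 p0' Hs Pp0'.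
  destruct (upto_ctx_step _ _ _ _ HK Pp0 Pp1 Hs) as (p1' & ES' & Hss & Hmon & HK' & Hpr & _).
  exists p1'. split; [auto|]. split; [auto|].
  split; [auto|]. split; [eauto using step_closed|]. split; [eauto using steps_closed|].
  exists ES'. split; auto. intros a b Hab. eapply tilde_mono; eauto.
Qed.

Lemma ctx_closure_value_step E p0 p1 :
  ctx_closure_tri E p0 p1 -> is_program p0 -> is_program p1 ->
  forall v0, step p0 v0 -> is_value v0 ->
  exists v1, steps p1 v1 /\ is_value v1 /\ ctx_closure_env (add_pair v0 v1 E).
Proof.
  intros (HE & Hc0 & Hc1 & ES & Hsub & HK) Pp0 Pp1 v0 Hs Vv0.
  destruct (upto_ctx_step _ _ _ _ HK Pp0 Pp1 Hs) as (v1 & ES' & Hss & Hmon & _ & _ & Hv).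
  destruct (Hv Vv0) as (Vv1 & He' & Ht').
  exists v1. split; [auto|]. split; [auto|]. split.
  - intros a b [[-> ->] | Hab]; [destruct Ht' as (_ & ? & ?); auto | apply HE; auto].
  - exists ES'. split; auto.
    intros a b [[-> ->] | Hab]; auto. eapply tilde_mono; eauto.
Qed.

Lemma ctx_closure_reset_pure E t0 t1 :
  ctx_closure_tri E t0 t1 ->
  forall E0 E1, pure E0 -> pure E1 -> hat E E0 E1 ->
  ctx_closure_tri E (Reset (plug E0 t0)) (Reset (plug E1 t1)).
Proof.
  intros (HE & Hc0 & Hc1 & ES & Hsub & HK) E0 E1 P0 P1 Hh.
  apply hat_iff in Hh as (Ho & HE0 & HE1).
  assert (HoS : hat_open ES E0 E1).
  { eapply hat_open_mono; [|exact Ho]. intros a b Hab. apply (Hsub a b Hab). }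
  split; [auto|]. split; [apply closed_plug; auto|]. split; [apply closed_plug; auto|].
  exists ES. split; [auto|].
  destruct HK as [(G0 & G1 & a0 & a1 & -> & -> & Hh & Ha) | [He Ht]].
  - left. exists (CReset (ctx_comp E0 G0)), (CReset (ctx_comp E1 G1)), a0, a1.
    simpl; rewrite !plug_ctx_comp. repeat split; auto.
    apply hat_iff in Hh as (HoG & HG0 & HG1).
    apply hat_iff; simpl; rewrite !closed_ctx_comp.
    split; [constructor; apply hat_open_comp|]; auto.
  - right. split; [auto|]. split; [|split; apply closed_plug; auto].
    apply tl_reset, tilde_open_plug; [auto | apply Ht].
Qed.

Lemma ctx_closure_subst E : ctx_closure_env E ->
  forall b0 b1, E (Lam b0) (Lam b1) ->
  forall v0 v1, is_value v0 -> is_value v1 -> tilde E v0 v1 ->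
  ctx_closure_tri E (subst 0 v0 b0) (subst 0 v1 b1).
Proof.
  intros (HE & ES & He & Hsub) b0 b1 Hb v0 v1 Vv0 Vv1 Hv.
  pose proof (HE _ _ Hb) as (_ & _ & Cb0 & Cb1).
  pose proof (tilde_mono_tilde _ _ Hsub _ _ Hv) as HvS.
  destruct Hv as (_ & Cv0 & Cv1).
  assert (Cs0 : closed (subst 0 v0 b0)) by (apply closed_at_subst; auto).
  assert (Cs1 : closed (subst 0 v1 b1)) by (apply closed_at_subst; auto).
  split; [auto|]. split; [auto|]. split; [auto|]. exists ES. split; [auto|].
  destruct (Hsub _ _ Hb) as (Ht & _ & _).
  destruct (tilde_open_lam_inv _ (approx_p_env_wf _ He) _ _ Ht) as (b1' & Heq & [Hb' | Hb']);
    injection Heq as <-.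
  - left. exists Hole, Hole, (subst 0 v0 b0), (subst 0 v1 b1).
    repeat split; [constructor|]. apply approx_p_subst; auto.
  - right. split; [auto|]. split; [|auto].
    apply (tilde_open_subst _ (approx_p_env_wf _ He)); auto. apply HvS.
Qed.

Lemma ctx_closure_is_bisim : is_bisim_p ctx_closure.
Proof.
  unfold is_bisim_p; simpl. split; [|split; [|split; [|split]]].
  - intros E H; apply H.
  - intros E t0 t1 (? & ? & ? & _); auto.
  - intros E t0 t1 H _. apply ctx_closure_reset_pure; auto.
  - intros E p0 p1 H Pp0 Pp1. split; [|split; [|split]].
    + eapply ctx_closure_program_step; eauto.
    + eapply ctx_closure_value_step; eauto.
    + intros p1' Hs Pp1'.
      destruct (ctx_closure_program_step _ _ _ (ctx_closure_tri_transp _ _ _ H) Pp1 Pp0 p1' Hs Pp1')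
        as (p0' & ? & ? & H').
      exists p0'. split; [auto|]. split; [auto|]. exact (ctx_closure_tri_transp _ _ _ H').
    + intros v1 Hs Vv1.
      destruct (ctx_closure_value_step _ _ _ (ctx_closure_tri_transp _ _ _ H) Pp1 Pp0 v1 Hs Vv1)
        as (v0 & ? & ? & H').
      exists v0. split; [auto|]. split; [auto|].
      apply ctx_closure_env_transp in H'. rewrite add_pair_transp in H'. exact H'.
  - apply ctx_closure_subst.
Qed.

Theorem lemma14 :
  forall (E : rel) (t0 t1 : term),
    is_env E -> closed t0 -> closed t1 ->
    approx_p_tri E t0 t1 ->
    forall F : ctx, closed_ctx F ->
      approx_p_tri E (plug F t0) (plug F t1).
Proof.
  intros E t0 t1 HE Hc0 Hc1 Ha F HF.
  exists ctx_closure. split; [exact ctx_closure_is_bisim|].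
  split; [auto|]. split; [apply closed_plug; auto|]. split; [apply closed_plug; auto|].
  exists E. split.
  - intros a b Hab. destruct (HE _ _ Hab) as (_ & _ & ? & ?).
    repeat split; auto. apply tl_base; auto.
  - left. exists F, F, t0, t1. repeat split; auto.
    apply hat_iff. auto using hat_open_refl.
Qed.
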